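(* Let $(\mathcal G,\lambda)$ be a small morphism-colored groupoid satisfying the inverse-compatibility condition, and let $I_1$ be the image of $\lambda$. Then the relation $\overset{1}{\sim}$ on $I_1$ is an equivalence relation.
   Context: A morphism-colored category is a pair $(\mathcal C,\lambda)$ where $\mathcal C$ is a category and $\lambda$ assigns to each morphism $f$ a color $\lambda(f)$, such that: whenever $g,f_1,f_2$ with $(f_1,f_2)$ composable satisfy $\lambda(g)=\lambda(f_1\circ f_2)$, there exist composable $g_1,g_2$ with $g=g_1\circ g_2$, $\lambda(g_1)=\lambda(f_1)$, $\lambda(g_2)=\lambda(f_2)$. It is a morphism-colored groupoid if $\mathcal C$ is a groupoid, and small if $\mathcal C$ is small and $\lambda$ is a map into a set. Inverse-compatibility: $\lambda(f)=\lambda(g)$ implies $\lambda(f^{-1})=\lambda(g^{-1})$. The relation $\overset{1}{\sim}$ on $I_1=\lambda(\mathrm{Mor}(\mathcal G))$: for every $l\ge1$ and every pair of composable sequences $(f_1,\dots,f_l)$, $(g_1,\dots,g_l)$ of morphisms of $\mathcal G$ with $\lambda(f_i)=\lambda(g_i)$ for $i=1,\dots,l$, declare $\lambda(f_1\circ\cdots\circ f_l)\overset{1}{\sim}\lambda(g_1\circ\cdots\circ g_l)$; no other pairs are related. *)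

From Stdlib Require Import List RelationClasses.
Import ListNotations.
Set Implicit Arguments.

Record SmallGroupoid := {
  Obj : Type;
  Hom : Obj -> Obj -> Type;
  comp : forall a b c, Hom b c -> Hom a b -> Hom a c;
  idm : forall a, Hom a a;
  inv : forall a b, Hom a b -> Hom b a;
  comp_assoc : forall a b c d (f : Hom a b) (g : Hom b c) (h : Hom c d),
      comp h (comp g f) = comp (comp h g) f;
  comp_id_l : forall a b (f : Hom a b), comp (idm b) f = f;
  comp_id_r : forall a b (f : Hom a b), comp f (idm a) = f;
  inv_l : forall a b (f : Hom a b), comp (inv f) f = idm a;
  inv_r : forall a b (f : Hom a b), comp f (inv f) = idm b
}.

Arguments comp {s a b c} _ _.
Arguments inv {s a b} _.

Definition coloring (G : SmallGroupoid) (I : Type) :=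
  forall a b : Obj G, Hom G a b -> I.

Definition morphism_colored (G : SmallGroupoid) (I : Type) (lam : coloring G I) :=
  forall (a c : Obj G) (g : Hom G a c)
         (a' b' c' : Obj G) (f1 : Hom G b' c') (f2 : Hom G a' b'),
    lam _ _ g = lam _ _ (comp f1 f2) ->
    exists (b : Obj G) (g1 : Hom G b c) (g2 : Hom G a b),
      g = comp g1 g2 /\ lam _ _ g1 = lam _ _ f1 /\ lam _ _ g2 = lam _ _ f2.

Definition inverse_compatible (G : SmallGroupoid) (I : Type) (lam : coloring G I) :=
  forall (a b a' b' : Obj G) (f : Hom G a b) (g : Hom G a' b'),
    lam _ _ f = lam _ _ g -> lam _ _ (inv f) = lam _ _ (inv g).

(** Nonempty composable sequences (f1, ..., fl), l >= 1, from a to b: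
    [pcons f1 p] with p a composable sequence (f2,...,fl) ending where f1 starts. *)
Inductive cpath (G : SmallGroupoid) : Obj G -> Obj G -> Type :=
| psingle : forall a b, Hom G a b -> cpath G a b
| pcons : forall a b c, Hom G b c -> cpath G a b -> cpath G a c.

Arguments psingle {G a b} _.
Arguments pcons {G a b c} _ _.

Fixpoint pcomp (G : SmallGroupoid) (a b : Obj G) (p : cpath G a b) : Hom G a b :=
  match p with
  | psingle f => f
  | pcons f q => comp f (pcomp q)
  end.

Fixpoint pcolors (G : SmallGroupoid) (I : Type) (lam : coloring G I)
    (a b : Obj G) (p : cpath G a b) : list I :=
  match p with
  | psingle f => [lam _ _ f]
  | pcons f q => lam _ _ f :: pcolors lam q
  end.

Definition image1 (G : SmallGroupoid) (I : Type) (lam : coloring G I) : Type :=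
  { x : I | exists (a b : Obj G) (f : Hom G a b), lam a b f = x }.

Definition sim1 (G : SmallGroupoid) (I : Type) (lam : coloring G I)
    (x y : image1 lam) : Prop :=
  exists (a b a' b' : Obj G) (p : cpath G a b) (q : cpath G a' b'),
    pcolors lam p = pcolors lam q /\
    lam _ _ (pcomp p) = proj1_sig x /\ lam _ _ (pcomp q) = proj1_sig y.

(** Call a word [w] of colors a realization of a color [t] when some composable
    sequence with color sequence [w] has a composite of color [t].  By the
    morphism-colored axiom, every morphism of color [t] then factors along [w].
    Two letter-level operations follow: a letter [c] of a realization may be
    replaced by any realization of [c], and, using inverses, a letter of a
    realization of [y] is realized by the word obtained from any other
    realization of [y] by padding it with the inverted remaining letters.  Since
    [x ~1 y] means that [x] and [y] have a common realization, transitivity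
    follows by expanding the realizations witnessing [x ~1 y] and [y ~1 z] into a
    common one. *)
From Stdlib Require Import List RelationClasses ClassicalEpsilon.
Import ListNotations.

Section GroupoidInverses.
Variable G : SmallGroupoid.

Lemma inv_unique (a b : Obj G) (f : Hom G a b) (g : Hom G b a) :
  comp g f = idm G a -> g = inv f.
Proof.
  intro Hgf.
  rewrite <- (comp_id_r _ _ _ g), <- (inv_r _ _ _ f), comp_assoc, Hgf.
  apply comp_id_l.
Qed.

Lemma inv_comp (a b c : Obj G) (g : Hom G b c) (f : Hom G a b) :
  inv (comp g f) = comp (inv f) (inv g).
Proof.
  symmetry; apply inv_unique.
  rewrite <- comp_assoc, (comp_assoc _ _ _ _ _ f g (inv g)), inv_l, comp_id_l.
  apply inv_l.
Qed.

Lemma comp_inv_cancel_r (a b c : Obj G) (g : Hom G b c) (f : Hom G a b) :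
  comp (comp g f) (inv f) = g.
Proof. rewrite <- comp_assoc, inv_r; apply comp_id_r. Qed.

Lemma comp_inv_cancel_l (a b c : Obj G) (g : Hom G b c) (f : Hom G a b) :
  comp (inv g) (comp g f) = f.
Proof. rewrite comp_assoc, inv_l; apply comp_id_l. Qed.

End GroupoidInverses.

Fixpoint pcat {G : SmallGroupoid} {a b c : Obj G} (p : cpath G b c) :
    cpath G a b -> cpath G a c :=
  match p in cpath _ b' c' return cpath G a b' -> cpath G a c' with
  | psingle f => fun q => pcons f q
  | pcons f p' => fun q => pcons f (pcat p' q)
  end.

Fixpoint prev {G : SmallGroupoid} {a b : Obj G} (p : cpath G a b) : cpath G b a :=
  match p with
  | psingle f => psingle (inv f)
  | pcons f q => pcat (prev q) (psingle (inv f))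
  end.

Section ColoredPaths.
Context {G : SmallGroupoid} {I : Type} (lam : coloring G I).

Lemma pcomp_pcat (a b c : Obj G) (p : cpath G b c) (q : cpath G a b) :
  pcomp (pcat p q) = comp (pcomp p) (pcomp q).
Proof.
  induction p as [b c f | b m c f p IH]; simpl; [reflexivity|].
  rewrite IH; apply comp_assoc.
Qed.

Lemma pcolors_pcat (a b c : Obj G) (p : cpath G b c) (q : cpath G a b) :
  pcolors lam (pcat p q) = pcolors lam p ++ pcolors lam q.
Proof.
  induction p as [b c f | b m c f p IH]; simpl; [reflexivity|].
  rewrite IH; reflexivity.
Qed.

Lemma pcomp_prev (a b : Obj G) (p : cpath G a b) :
  pcomp (prev p) = inv (pcomp p).
Proof.
  induction p as [a b f | a m b f p IH]; simpl; [reflexivity|].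
  rewrite pcomp_pcat, IH; symmetry; apply inv_comp.
Qed.

Lemma pcolors_neq_nil (a b : Obj G) (p : cpath G a b) : pcolors lam p <> [].
Proof. destruct p; discriminate. Qed.

Definition realizes (w : list I) (t : I) : Prop :=
  exists (a b : Obj G) (p : cpath G a b), pcolors lam p = w /\ lam a b (pcomp p) = t.

Lemma realizes_neq_nil {w : list I} {t : I} : realizes w t -> w <> [].
Proof. intros (a & b & p & <- & _); apply pcolors_neq_nil. Qed.

(* Meaningful only on colors of morphisms; elsewhere its value is arbitrary. *)
Definition inv_color (c : I) : I :=
  epsilon (inhabits c) (fun d => exists (a b : Obj G) (f : Hom G a b),
    lam a b f = c /\ lam b a (inv f) = d).

Definition winv (w : list I) : list I := rev (map inv_color w).

Lemma winv_cons (c : I) (w : list I) : winv (c :: w) = winv w ++ [inv_color c].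
Proof. reflexivity. Qed.

Hypothesis Hcol : morphism_colored lam.
Hypothesis Hinv : inverse_compatible lam.

Lemma lam_inv (a b : Obj G) (f : Hom G a b) :
  lam b a (inv f) = inv_color (lam a b f).
Proof.
  unfold inv_color.
  match goal with |- _ = epsilon ?i ?P => destruct (epsilon_spec i P) as (a' & b' & f' & Hf' & <-) end.
  - exists (lam b a (inv f)), a, b, f; split; reflexivity.
  - apply Hinv; symmetry; exact Hf'.
Qed.

Lemma pcolors_prev (a b : Obj G) (p : cpath G a b) :
  pcolors lam (prev p) = winv (pcolors lam p).
Proof.
  induction p as [a b f | a m b f p IH]; simpl.
  - rewrite lam_inv; reflexivity.
  - rewrite pcolors_pcat, IH, winv_cons; simpl; rewrite lam_inv; reflexivity.
Qed.

Lemma realizes_decompose {w : list I} {a b : Obj G} {g : Hom G a b} :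
  realizes w (lam a b g) -> exists r : cpath G a b, pcomp r = g /\ pcolors lam r = w.
Proof.
  intros (a' & b' & s & <- & Hs); revert a b g Hs.
  induction s as [a' b' f | a' m b' f s IH]; intros a b g Hs; simpl in Hs |- *.
  - exists (psingle g); simpl; rewrite Hs; split; reflexivity.
  - destruct (Hcol _ _ g _ _ _ f (pcomp s) (eq_sym Hs)) as (c & g1 & g2 & -> & Hg1 & Hg2).
    destruct (IH _ _ g2 (eq_sym Hg2)) as (r & <- & Hr).
    exists (pcons g1 r); simpl; rewrite Hr, Hg1; split; reflexivity.
Qed.

Lemma cpath_subst {a b : Obj G} (p : cpath G a b) (u : list I) (c : I) (v D : list I) :
  pcolors lam p = u ++ c :: v -> realizes D c ->
  exists p' : cpath G a b, pcomp p' = pcomp p /\ pcolors lam p' = u ++ D ++ v.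
Proof.
  intros Hp HD; revert u Hp.
  induction p as [a b h | a m b h q IH]; intros [| x u] Hp; simpl in Hp |- *.
  - injection Hp as Hc <-; subst c.
    destruct (realizes_decompose HD) as (r & Hr & HrD).
    exists r; rewrite app_nil_r; split; assumption.
  - injection Hp as _ Hp; destruct u; discriminate.
  - injection Hp as Hc <-; subst c.
    destruct (realizes_decompose HD) as (r & Hr & HrD).
    exists (pcat r q); rewrite pcomp_pcat, pcolors_pcat, Hr, HrD; split; reflexivity.
  - injection Hp as <- Hq.
    destruct (IH u Hq) as (q' & Hq' & Hq'D).
    exists (pcons h q'); simpl; rewrite Hq', Hq'D; split; reflexivity.
Qed.

Lemma realizes_subst {u : list I} {c : I} {v D : list I} {t : I} :
  realizes (u ++ c :: v) t -> realizes D c -> realizes (u ++ D ++ v) t.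
Proof.
  intros (a & b & p & Hp & Ht) HD.
  destruct (cpath_subst p u c v D Hp HD) as (p' & Hp' & Hp'D).
  exists a, b, p'; rewrite Hp'; split; assumption.
Qed.

(* The letter [c] of [p] is isolated by composing [r] with the inverses of the
   letters of [p] around it. *)
Lemma cpath_cancel {a b : Obj G} (p r : cpath G a b) (u : list I) (c : I) (v : list I) :
  pcomp r = pcomp p -> pcolors lam p = u ++ c :: v ->
  realizes (winv u ++ pcolors lam r ++ winv v) c.
Proof.
  revert r u.
  induction p as [a b h | a m b h q IH]; intros r [| x u] Hr Hp; simpl in Hp.
  - injection Hp as <- <-.
    exists a, b, r; simpl; rewrite app_nil_r, Hr; split; reflexivity.
  - injection Hp as _ Hp; destruct u; discriminate.
  - injection Hp as <- <-.
    exists m, b, (pcat r (prev q)); simpl.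
    rewrite pcolors_pcat, pcolors_prev, pcomp_pcat, pcomp_prev, Hr.
    simpl; rewrite comp_inv_cancel_r; split; reflexivity.
  - injection Hp as <- Hq.
    assert (Hr' : pcomp (pcons (inv h) r) = pcomp q)
      by (simpl; rewrite Hr; apply comp_inv_cancel_l).
    specialize (IH _ u Hr' Hq); simpl in IH.
    rewrite lam_inv in IH; rewrite winv_cons, <- app_assoc; exact IH.
Qed.

Lemma realizes_cancel {u : list I} {c : I} {v Z : list I} {y : I} :
  realizes (u ++ c :: v) y -> realizes Z y -> realizes (winv u ++ Z ++ winv v) c.
Proof.
  intros (a & b & p & Hp & <-) HZ.
  destruct (realizes_decompose HZ) as (r & Hr & <-).
  exact (cpath_cancel p r u c v Hr Hp).
Qed.

Lemma realizes_common {W V : list I} {x y z : I} :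
  realizes W x -> realizes W y -> realizes V y -> realizes V z ->
  exists U, realizes U x /\ realizes U z.
Proof.
  intros HxW HyW HyV HzV.
  (* With [W = W0 ++ [w]] and [V = v :: V0], the common realization is
     [W0 ++ winv W0 ++ W ++ winv V0 ++ V0], obtained by expanding the letter [v]
     of [V] and the letter [w] of [W]. *)
  destruct (exists_last (realizes_neq_nil HxW)) as (W0 & w & ->).
  destruct V as [| v V0]; [exfalso; exact (realizes_neq_nil HyV eq_refl)|].
  pose proof (realizes_cancel (u := []) HyV HyW) as Hv.
  pose proof (realizes_subst (u := []) HyV Hv) as HyW'.
  pose proof (realizes_subst (u := []) HzV Hv) as HzW'.
  simpl in Hv, HyW', HzW'; rewrite <- !app_assoc in HyW', HzW'; simpl in HyW', HzW'.
  pose proof (realizes_cancel HyW HyW') as Hw'.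
  pose proof (realizes_cancel HyW HyW) as Hw.
  simpl in Hw', Hw; rewrite app_nil_r in Hw', Hw.
  exists (W0 ++ winv W0 ++ W0 ++ w :: winv V0 ++ V0); split.
  - pose proof (realizes_subst HxW Hw') as HxU.
    rewrite app_nil_r in HxU; exact HxU.
  - pose proof (realizes_subst HzW' Hw) as HzU.
    rewrite <- !app_assoc in HzU; exact HzU.
Qed.

End ColoredPaths.

Lemma sim1_iff (G : SmallGroupoid) (I : Type) (lam : coloring G I) (x y : image1 lam) :
  sim1 x y <-> exists w, realizes lam w (proj1_sig x) /\ realizes lam w (proj1_sig y).
Proof.
  split.
  - intros (a & b & a' & b' & p & q & Hpq & Hx & Hy).
    exists (pcolors lam p); split; [exists a, b, p | exists a', b', q]; auto.
  - intros (w & (a & b & p & Hp & Hx) & (a' & b' & q & Hq & Hy)).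
    exists a, b, a', b', p, q; split; [congruence | auto].
Qed.

Theorem proposition3p5 (G : SmallGroupoid) (I : Type) (lam : coloring G I)
    (Hcol : morphism_colored lam) (Hinv : inverse_compatible lam) :
  Equivalence (@sim1 G I lam).
Proof.
  split.
  - intros [x (a & b & f & <-)]; apply sim1_iff.
    exists [lam a b f]; split; exists a, b, (psingle f); auto.
  - intros x y Hxy; apply sim1_iff in Hxy as (w & Hx & Hy); apply sim1_iff; eauto.
  - intros x y z Hxy Hyz; apply sim1_iff.
    apply sim1_iff in Hxy as (W & HxW & HyW), Hyz as (V & HyV & HzV).
    exact (realizes_common lam Hcol Hinv HxW HyW HyV HzV).
Qed.
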